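(* For every integer $k\ge0$ and every $m\in\mathbb Z$, the elements ${}_kG\Theta_m(x,a)$ and ${}_kG\Theta^*_m(x,a)$ lie in $G\Gamma\otimes_{\mathbb Q[\beta]}\mathcal R_a$ and are invariant under the action of the subgroup $W_{(k)}\subset W_\infty$ (equivalently, fixed by $s_0^a,s_1^a,\dots,s_{k-1}^a$ and by $s_i^a$, $i>k$).
   Context: Grading: $\deg x_i=\deg a_i=\deg b_i=1$, $\deg\beta=-1$; $R[[y_1,\dots]]_{\mathrm{gr}}$ denotes the ring of finite sums of homogeneous formal power series. Notation: $u\oplus v=u+v+\beta uv$, $u\ominus v=(u-v)/(1+\beta v)$, $\bar u=-u/(1+\beta u)$. $G\Gamma$ is the subring of $\mathbb Q[\beta][[x_1,x_2,\dots]]_{\mathrm{gr}}$ of series $f$ that are symmetric in the $x_i$ and satisfy $f(t,\bar t,x_3,x_4,\dots)=f(0,0,x_3,x_4,\dots)$. $\mathcal R_a=\bigcup_m\mathbb Q[\beta][[a_1,\dots,a_m]]_{\mathrm{gr}}$. $W_\infty$ is the infinite hyperoctahedral group generated by $s_0,s_1,\dots$ (signed permutations), $W_{(k)}$ the subgroup generated by $s_i$, $i\ne k$. It acts on $G\Gamma\otimes\mathcal R_a$ by: $s_i^a$ ($i\ge1$) swaps $a_i$ and $a_{i+1}$; $s_0^a f(x_1,x_2,\dots;a_1,a_2,\dots)=f(a_1,x_1,x_2,\dots;\bar a_1,a_2,\dots)$. The functions are defined by \[ \sum_{m\in\mathbb Z}{}_kG\Theta_m(x,a)u^m=\frac{1}{1+\beta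 u^{-1}}\prod_{i=1}^\infty\frac{1+(u+\beta)x_i}{1+(u+\beta)\bar x_i}\prod_{i=1}^k(1+(u+\beta)a_i),\qquad \sum_m{}_kG\Theta^*_m(x,a)u^m=\frac{1}{2+\beta u^{-1}}\sum_m{}_kG\Theta_m(x,a)u^m, \] with $\frac1{1+\beta u^{-1}}=\sum_{i\ge0}(-\beta)^iu^{-i}$, $\frac{1}{2+\beta u^{-1}}=\frac12\sum_{s\ge0}(-\beta/2)^su^{-s}$. *)

From HB Require Import structures.
From mathcomp Require Import all_boot all_order all_algebra perm.
Set Implicit Arguments. Unset Strict Implicit. Unset Printing Implicit Defensive.
Import Order.TTheory GRing.Theory Num.Theory.
Local Open Scope ring_scope.

Definition beta : {poly rat} := 'X.

(* An element of Q[beta][[x_1,x_2,...; a_1,a_2,...]]: the coefficient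
   (a polynomial in beta) of the monomial x^e a^g, where e (resp. g) is the
   exponent sequence of x_1,x_2,... (resp. a_1,a_2,...), read with
   [nth 0] (trailing zeros are irrelevant, see [wf]). *)
Definition ser := seq nat -> seq nat -> {poly rat}.

Definition wf (f : ser) : Prop :=
  forall e g, f (rcons e 0%N) g = f e g /\ f e (rcons g 0%N) = f e g.

(* total degree: deg x_i = deg a_i = 1, deg beta = -1 *)
Definition mdeg (e g : seq nat) (i : nat) : int :=
  (sumn e + sumn g)%:Z - i%:Z.

(* finite sum of homogeneous series: only finitely many degrees occur *)
Definition graded (f : ser) : Prop :=
  exists ds : seq int, forall e g i, (f e g)`_i != 0 -> mdeg e g i \in ds.

Definition afree (f : ser) : Prop :=
  forall e g, has (fun n => n != 0%N) g -> f e g = 0.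
Definition xfree (f : ser) : Prop :=
  forall e g, has (fun n => n != 0%N) e -> f e g = 0.

Definition psmul (R : nzRingType) (f h : nat -> R) : nat -> R :=
  fun n => \sum_(i < n.+1) f i * h (n - i)%N.
Definition psone (R : nzRingType) : nat -> R := fun n => (n == 0%N)%:R.
Definition psexp (R : nzRingType) (f : nat -> R) (n : nat) : nat -> R :=
  iter n (psmul f) (@psone R).
(* tbar = -t/(1 + b t) = sum_{j>=1} -(-b)^(j-1) t^j *)
Definition tbarR (R : nzRingType) (b : R) : nat -> R :=
  fun j => if j is j'.+1 then - (- b) ^+ j' else 0.

Definition sym_x (f : ser) : Prop :=
  forall (n : nat) (s : 'S_n) e g, (size e <= n)%N ->
    f [seq nth 0%N e (s i) | i <- enum 'I_n] g = f e g.

(* f(t, tbar, x_3, x_4, ...), with the variable t put in the slot of x_1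
   (x_2 no longer occurs). *)
Definition subst_t_tbar (f : ser) : ser := fun e g =>
  if nth 0%N e 1 != 0%N then 0 else
  \sum_(e1 < (nth 0%N e 0).+1) \sum_(e2 < (nth 0%N e 0).+1)
    f ((e1 : nat) :: (e2 : nat) :: drop 2 e) g * psexp (tbarR beta) e2 (nth 0%N e 0 - e1)%N.
Definition subst_0_0 (f : ser) : ser := fun e g =>
  if (nth 0%N e 0 == 0%N) && (nth 0%N e 1 == 0%N)
  then f (0 :: 0 :: drop 2 e)%N g else 0.

Definition inGGamma (f : ser) : Prop :=
  [/\ wf f, graded f, afree f, sym_x f & subst_t_tbar f = subst_0_0 f].

(* ---- the ring R_a = union_m Q[beta][[a_1..a_m]]_gr ---- *)
Definition inRa (f : ser) : Prop :=
  [/\ wf f, graded f, xfree f &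
      exists m, forall e g, has (fun n => n != 0%N) (drop m g) -> f e g = 0].

Fixpoint subexps (e : seq nat) : seq (seq nat) :=
  if e is n :: e' then
    [seq (i :: s) | i <- iota 0 n.+1, s <- subexps e'] else [:: [::]].
Definition esub (e e1 : seq nat) : seq nat :=
  [seq (nth 0 e i - nth 0 e1 i)%N | i <- iota 0 (size e)].
Definition sermul (f h : ser) : ser := fun e g =>
  \sum_(e1 <- subexps e) \sum_(g1 <- subexps g) f e1 g1 * h (esub e e1) (esub g g1).

(* G Gamma (x)_{Q[beta]} R_a, as the subring of series spanned by products *)
Definition inGGammaRa (f : ser) : Prop :=
  exists (n : nat) (G R : 'I_n -> ser),
    (forall i, inGGamma (G i) /\ inRa (R i)) /\
    forall e g, f e g = \sum_(i < n) sermul (G i) (R i) e g.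

(* s_0^a f = f(a_1, x_1, x_2, ...; abar_1, a_2, ...) *)
Definition s0a (f : ser) : ser := fun e g =>
  \sum_(e1 < (head 0%N g).+1) \sum_(g1 < (head 0%N g).+1)
    f ((e1 : nat) :: e) ((g1 : nat) :: behead g) * psexp (tbarR beta) g1 (head 0%N g - e1)%N.
Definition swapexp (p : nat) (g : seq nat) : seq nat :=
  [seq nth 0%N g (if j == p then p.+1 else if j == p.+1 then p else j)
  | j <- iota 0 (maxn (size g) p.+2)].
(* s_i^a (i >= 1) swaps a_i and a_{i+1} *)
Definition sia (i : nat) (f : ser) : ser := fun e g => f e (swapexp i.-1 g).
Definition sa (i : nat) : ser -> ser := if i == 0%N then s0a else sia i.

(* polynomials in u with coefficients in Q[beta] *)
Definition uu : {poly {poly rat}} := 'X.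
Definition bb : {poly {poly rat}} := beta%:P.
Definition cc : {poly {poly rat}} := uu + bb.
(* coefficients (in t) of 1 + (u+beta) t *)
Definition lin (j : nat) : {poly {poly rat}} :=
  if j == 0%N then 1 else if j == 1%N then cc else 0.
(* coefficients of 1/(1 + (u+beta) tbar) = sum_n (-(u+beta))^n tbar^n *)
Definition psi (j : nat) : {poly {poly rat}} :=
  \sum_(n < j.+1) (- cc) ^+ n * psexp (tbarR bb) n j.
(* coefficients of (1 + (u+beta) t) / (1 + (u+beta) tbar) *)
Definition phi (j : nat) : {poly {poly rat}} := psmul lin psi j.

(* coefficient of x^e a^g in prod_i phi(x_i) * prod_{i<=k} (1+(u+beta)a_i),
   a polynomial in u *)
Definition Pc (k : nat) (e g : seq nat) : {poly {poly rat}} :=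
  if has (fun n => n != 0%N) (drop k g) then 0 else
  (\prod_(i < size e) phi (nth 0%N e i)) * \prod_(i < k) lin (nth 0%N g i).

(* coefficient of u^m in (sum_{i>=0} (-beta)^i u^(-i)) * sum_j Pc_j u^j *)
Definition GTheta (k : nat) (m : int) : ser := fun e g =>
  \sum_(j < size (Pc k e g) | m <= j%:Z) (- beta) ^+ absz (j%:Z - m) * (Pc k e g)`_j.

(* coefficient of u^m in 1/2 sum_s (-beta/2)^s u^(-s) * sum_m' GTheta_m' u^m';
   the terms with s >= |size Pc - m| + 1 all vanish since GTheta_m' = 0
   at (e,g) for m' >= size (Pc k e g). *)
Definition GThetaS (k : nat) (m : int) : ser := fun e g =>
  (2%:R : rat)^-1 *:
  \sum_(s < (absz ((size (Pc k e g))%:Z - m)).+1)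
    ((- (2%:R : rat)^-1) ^+ s *: beta ^+ s) * GTheta k (m + s%:Z) e g.

(* Write phi(t) = (1 + (u+beta) t) / (1 + (u+beta) tbar), so that the generating
   function is prod_i phi(x_i) * prod_(i<=k) (1 + (u+beta) a_i), and both kGTheta_m and
   kGTheta*_m are images of it under Q[beta]-linear functionals L_m satisfying
   L_m(P u^t) = L_(m-t)(P).
   Since t |-> tbar is an involution, phi(t) phi(tbar) = 1, which is the cancellation
   property defining GGamma; the x-part is clearly symmetric.  The a-part is a polynomial
   of degree <= k in u with coefficients in R_a, so splitting it into its u^t-components
   writes the functions as finite sums of products in GGamma (x) R_a.
   For the invariance, s_i^a (1 <= i < k) permutes the factors of the a-part, s_i^a
   (i > k) swaps two variables that do not occur, and s_0^a replaces the factor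
   1 + (u+beta) a_1 by phi(a_1) (1 + (u+beta) abar_1), which equals it by the same
   involution: phi(t) (1 + (u+beta) tbar) = 1 + (u+beta) t. *)

From HB Require Import structures.
From mathcomp Require Import all_boot all_order all_algebra perm.
From mathcomp Require Import ring zify.
From Stdlib Require Import FunctionalExtensionality.
Set Implicit Arguments. Unset Strict Implicit. Unset Printing Implicit Defensive.
Import Order.TTheory GRing.Theory Num.Theory.
Local Open Scope ring_scope.

Lemma sum_ord_widen0 (V : nmodType) (F : nat -> V) n B :
  (n <= B)%N -> (forall i, (n <= i < B)%N -> F i = 0) ->
  \sum_(i < n) F i = \sum_(i < B) F i.
Proof.
move=> nB F0; rewrite -(big_mkord xpredT) -(big_mkord xpredT F).
rewrite [RHS](big_cat_nat (leq0n n) nB) /= [X in _ = _ + X]big_nat_cond.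
by rewrite [X in _ = _ + X]big1 ?addr0 // => i /andP[/F0].
Qed.

Section TruncatedSeries.
Variable R : comNzRingType.
Implicit Types (p q s : {poly R}) (f h : nat -> R).

Definition eq_upto N p q := forall i, (i < N)%N -> p`_i = q`_i.

Lemma eq_upto_sym N p q : eq_upto N p q -> eq_upto N q p.
Proof. by move=> Epq i Hi; rewrite Epq. Qed.

Lemma eq_upto_trans N p q r : eq_upto N p q -> eq_upto N q r -> eq_upto N p r.
Proof. by move=> Epq Eqr i Hi; rewrite Epq // Eqr. Qed.

Lemma eq_upto_add N p q p' q' :
  eq_upto N p p' -> eq_upto N q q' -> eq_upto N (p + q) (p' + q').
Proof. by move=> Ep Eq i Hi; rewrite !coefD Ep // Eq. Qed.

Lemma eq_upto_mul N p q p' q' :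
  eq_upto N p p' -> eq_upto N q q' -> eq_upto N (p * q) (p' * q').
Proof.
move=> Ep Eq i Hi; rewrite !coefM; apply: eq_bigr => j _.
by rewrite Ep ?Eq //; have := ltn_ord j; lia.
Qed.

Lemma coef_exp_lt p k j : p`_0 = 0 -> (j < k)%N -> (p ^+ k)`_j = 0.
Proof.
move=> p0; elim: k j => [//|k IH] j Hj.
rewrite exprS coefM big1 // => i _.
case: (nat_of_ord i) (ltn_ord i) => [|i'] Hi; first by rewrite p0 mul0r.
by rewrite IH ?mulr0 //; lia.
Qed.

Lemma coef_comp_poly_widen p s B j : (size p <= B)%N ->
  (p \Po s)`_j = \sum_(i < B) p`_i * (s ^+ i)`_j.
Proof.
move=> HB; rewrite comp_polyE coef_sum.
rewrite -(@sum_ord_widen0 _ (fun i => p`_i * (s ^+ i)`_j) (size p) B) //.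
- by apply: eq_bigr => i _; rewrite coefZ.
- by move=> i /andP[Hi _]; rewrite nth_default ?mul0r.
Qed.

Lemma coef_comp_poly_lt p s j : s`_0 = 0 ->
  (p \Po s)`_j = \sum_(i < j.+1) p`_i * (s ^+ i)`_j.
Proof.
move=> s0; rewrite (@coef_comp_poly_widen p s (size p + j.+1)) ?leq_addr //.
symmetry; apply: (@sum_ord_widen0 _ (fun i => p`_i * (s ^+ i)`_j)).
  exact: leq_addl.
by move=> i /andP[Hi _]; rewrite coef_exp_lt ?mulr0.
Qed.

Lemma eq_upto_comp N p q s : eq_upto N p q -> s`_0 = 0 ->
  eq_upto N (p \Po s) (q \Po s).
Proof.
move=> E s0 j Hj; rewrite !coef_comp_poly_lt //.
by apply: eq_bigr => i _; rewrite E //; have := ltn_ord i; lia.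
Qed.

Definition ps_trunc N f : {poly R} := \poly_(i < N) f i.

Lemma psmul_trunc N f h j : (j < N)%N -> psmul f h j = (ps_trunc N f * ps_trunc N h)`_j.
Proof.
move=> Hj; rewrite coefM /psmul; apply: eq_bigr => i _.
by rewrite !coef_poly ifT ?ifT //; have := ltn_ord i; lia.
Qed.

Lemma psexp_trunc N f e j : (j < N)%N -> psexp f e j = (ps_trunc N f ^+ e)`_j.
Proof.
elim: e j => [|e IH] j Hj; first by rewrite /psexp /= coef1 /psone.
rewrite exprS coefM /psexp /= /psmul; apply: eq_bigr => i _.
by rewrite coef_poly ifT -?IH //; have := ltn_ord i; lia.
Qed.

Lemma psexp_lt f e j : f 0%N = 0 -> (j < e)%N -> psexp f e j = 0.
Proof.
move=> f0; elim: e j => [//|e IH] j Hj.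
rewrite /psexp /= /psmul big1 // => i _.
case: (nat_of_ord i) (ltn_ord i) => [|i'] Hi; first by rewrite f0 mul0r.
by rewrite -/(psexp f e (j - i'.+1)) IH ?mulr0 //; lia.
Qed.

Definition lin_series (a : R) : {poly R} := 1 + a%:P * 'X.

Lemma lin_series_comp a q : lin_series a \Po q = 1 + a%:P * q.
Proof. by rewrite comp_polyD comp_polyM !comp_polyC comp_polyX polyC1. Qed.

Variables b c : R.

Definition tbar_trunc N := ps_trunc N (tbarR b).
Definition geom_tbar N := \sum_(k < N) (- (c%:P * tbar_trunc N)) ^+ k.
Definition phi_series N := lin_series c * geom_tbar N.

Lemma tbar_trunc0 N : (tbar_trunc N)`_0 = 0.
Proof. by rewrite coef_poly; case: ifP. Qed.

Lemma coef_comp_tbar p N j : (j < N)%N ->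
  (p \Po tbar_trunc N)`_j = \sum_(i < N) p`_i * psexp (tbarR b) i j.
Proof.
move=> Hj; rewrite coef_comp_poly_lt ?tbar_trunc0 //.
rewrite (@sum_ord_widen0 _ (fun i => p`_i * (tbar_trunc N ^+ i)`_j) j.+1 N) //.
  by apply: eq_bigr => i _; rewrite (psexp_trunc (N:=N)).
by move=> i /andP[Hi _]; rewrite coef_exp_lt ?tbar_trunc0 ?mulr0.
Qed.

Lemma lin_b_tbar N : eq_upto N (lin_series b * tbar_trunc N) (- 'X).
Proof.
move=> i Hi; rewrite mulrDl mul1r -mulrA coefD coefCM coefXM coefN coefX.
rewrite !coef_poly Hi.
case: i Hi => [|[|i]] Hi /=; first by rewrite mulr0 addr0 oppr0.
  by case: ifP => _; rewrite expr0 mulr0 addr0.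
rewrite ifT; last by lia.
by rewrite oppr0 exprS; ring.
Qed.

Lemma lin_tbar_geom N : eq_upto N ((1 + c%:P * tbar_trunc N) * geom_tbar N) 1.
Proof.
set y := - (c%:P * tbar_trunc N).
have -> : 1 + c%:P * tbar_trunc N = - (y - 1) by rewrite /y; ring.
rewrite mulNr /geom_tbar -/y -subrX1 opprB => i Hi.
by rewrite coefB coef_exp_lt ?subr0 // /y coefN coefCM tbar_trunc0 mulr0 oppr0.
Qed.

(* From (1 + b t) tbar(t) = -t: compose with tbar and use (1 + b tbar) (1 + b t) = 1. *)
Lemma tbar_trunc_involutive N : eq_upto N (tbar_trunc N \Po tbar_trunc N) 'X.
Proof.
set T := tbar_trunc N \Po tbar_trunc N; set E := 1 + b%:P * tbar_trunc N.
have ET : eq_upto N (E * T) (- tbar_trunc N).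
  have -> : E * T = (lin_series b * tbar_trunc N) \Po tbar_trunc N.
    by rewrite comp_polyM lin_series_comp.
  have -> : - tbar_trunc N = (- 'X) \Po tbar_trunc N.
    by rewrite -[- 'X]sub0r comp_polyB comp_poly0 comp_polyX sub0r.
  by apply: eq_upto_comp; [exact: lin_b_tbar | exact: tbar_trunc0].
have linE : eq_upto N (lin_series b * E) 1.
  have -> : lin_series b * E = lin_series b + b%:P * (lin_series b * tbar_trunc N).
    by rewrite /E /lin_series; ring.
  apply: eq_upto_trans (_ : eq_upto N (lin_series b + b%:P * (- 'X)) 1).
    by apply: eq_upto_add => //; apply: eq_upto_mul => //; exact: lin_b_tbar.
  by rewrite /lin_series; have -> : 1 + b%:P * 'X + b%:P * - 'X = (1 : {poly R}) by ring.
have -> : T = 1 * T by rewrite mul1r.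
apply: eq_upto_trans (_ : eq_upto N (lin_series b * (E * T)) _).
  by rewrite mulrA; apply: eq_upto_mul => //; exact: eq_upto_sym.
apply: eq_upto_trans (_ : eq_upto N (lin_series b * (- tbar_trunc N)) _).
  exact: eq_upto_mul.
by rewrite mulrN => i Hi; rewrite coefN (lin_b_tbar Hi) coefN opprK.
Qed.

Lemma phi_series_lin_comp N :
  eq_upto N (phi_series N * (lin_series c \Po tbar_trunc N)) (lin_series c).
Proof.
rewrite lin_series_comp /phi_series -mulrA mulrC -[X in eq_upto _ _ X]mul1r.
by apply: eq_upto_mul => //; rewrite mulrC; exact: lin_tbar_geom.
Qed.

Lemma phi_series_comp_tbar N :
  eq_upto N (phi_series N * (phi_series N \Po tbar_trunc N)) 1.
Proof.
have geomE : eq_upto N (lin_series c * (geom_tbar N \Po tbar_trunc N)) 1.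
  have E := @eq_upto_comp N _ _ (tbar_trunc N) (@lin_tbar_geom N) (tbar_trunc0 _).
  rewrite comp_polyM comp_polyD comp_polyM -polyC1 !comp_polyC polyC1 in E.
  apply: eq_upto_trans E; apply: eq_upto_mul => //.
  apply: eq_upto_add => //; apply: eq_upto_mul => //.
  exact/eq_upto_sym/tbar_trunc_involutive.
have -> : phi_series N * (phi_series N \Po tbar_trunc N) =
    ((1 + c%:P * tbar_trunc N) * geom_tbar N) *
    (lin_series c * (geom_tbar N \Po tbar_trunc N)).
  by rewrite /phi_series comp_polyM lin_series_comp; ring.
by rewrite -[X in eq_upto _ _ X]mul1r; apply: eq_upto_mul; [exact: lin_tbar_geom|].
Qed.

End TruncatedSeries.

Local Notation upoly := {poly {poly rat}}.

Lemma lin_coef j : lin j = (lin_series cc)`_j.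
Proof.
rewrite coefD coef1 coefCM coefX /lin.
by case: j => [|[|j]] /=; rewrite ?mulr0 ?mulr1 ?addr0 ?add0r.
Qed.

Lemma psi_coef N j : (j < N)%N -> psi j = (geom_tbar bb cc N)`_j.
Proof.
move=> Hj; rewrite /psi /geom_tbar coef_sum.
rewrite (@sum_ord_widen0 _ (fun n => (- cc) ^+ n * psexp (tbarR bb) n j) j.+1 N) //.
  apply: eq_bigr => k _.
  by rewrite -mulNr -polyCN exprMn -rmorphXn coefCM (psexp_trunc (N:=N)).
by move=> i /andP[Hi _]; rewrite psexp_lt ?mulr0.
Qed.

Lemma phi_coef N j : (j < N)%N -> phi j = (phi_series bb cc N)`_j.
Proof.
move=> Hj; rewrite /phi (psmul_trunc (N:=N)) //; apply: (@eq_upto_mul _ N) => // i Hi.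
  by rewrite coef_poly Hi lin_coef.
by rewrite coef_poly Hi (psi_coef (N:=N)).
Qed.

Lemma sum_phi_phi_tbar n : \sum_(e1 < n.+1) \sum_(e2 < n.+1)
  phi e1 * phi e2 * psexp (tbarR bb) e2 (n - e1) = (n == 0%N)%:R.
Proof.
set Phi := phi_series bb cc n.+1.
transitivity (\sum_(e1 < n.+1) Phi`_e1 * (Phi \Po tbar_trunc bb n.+1)`_(n - e1)).
  apply: eq_bigr => e1 _; rewrite coef_comp_tbar ?ltnS ?leq_subr // mulr_sumr.
  rewrite (phi_coef (N:=n.+1)) //; apply: eq_bigr => e2 _.
  by rewrite (phi_coef (N:=n.+1)) // mulrA.
by rewrite -coef1 -(phi_series_comp_tbar bb cc (ltnSn n)) coefM.
Qed.

Lemma sum_phi_lin_tbar n : \sum_(e1 < n.+1) \sum_(g1 < n.+1)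
  phi e1 * lin g1 * psexp (tbarR bb) g1 (n - e1) = lin n.
Proof.
set Phi := phi_series bb cc n.+1.
transitivity (\sum_(e1 < n.+1) Phi`_e1 * (lin_series cc \Po tbar_trunc bb n.+1)`_(n - e1)).
  apply: eq_bigr => e1 _; rewrite coef_comp_tbar ?ltnS ?leq_subr // mulr_sumr.
  by rewrite (phi_coef (N:=n.+1)) //; apply: eq_bigr => g1 _; rewrite lin_coef mulrA.
by rewrite lin_coef -(phi_series_lin_comp bb cc (ltnSn n)) coefM.
Qed.

Lemma psexp_tbar_polyC n j : psexp (tbarR bb) n j = (psexp (tbarR beta) n j)%:P.
Proof.
have tbarC i : tbarR bb i = (tbarR beta i)%:P.
  by case: i => [|i] /=; rewrite ?polyC0 // rmorphN rmorphXn rmorphN.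
elim: n j => [|n IH] j; first by rewrite /psexp /= /psone polyC_natr.
rewrite /psexp /= /psmul rmorph_sum; apply: eq_bigr => i _.
by rewrite rmorphM /= tbarC -IH.
Qed.

Definition hasnz (s : seq nat) := has (fun n => n != 0%N) s.

Lemma hasnz_dropP k g :
  reflect (exists2 j, (k <= j)%N & nth 0%N g j != 0%N) (hasnz (drop k g)).
Proof.
apply: (iffP (has_nthP 0%N)) => [[i Hi Hnz] | [j Hj Hnz]].
  by exists (k + i)%N; rewrite ?leq_addr // -nth_drop.
have Hs : (j < size g)%N by case: ltnP Hnz => // Hg; rewrite nth_default.
by exists (j - k)%N; rewrite ?size_drop ?nth_drop ?subnKC //; lia.
Qed.

Lemma nth_hasnzN s : ~~ hasnz s -> forall i, nth 0%N s i = 0%N.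
Proof.
move=> H i; apply/eqP; apply: contraNT H => Hi.
by rewrite -[s]drop0; apply/hasnz_dropP; exists i.
Qed.

Lemma hasnzN_nseq s : ~~ hasnz s -> s = nseq (size s) 0%N.
Proof.
move=> H; apply: (@eq_from_nth _ 0%N); first by rewrite size_nseq.
by move=> i Hi; rewrite nth_nseq Hi nth_hasnzN.
Qed.

Lemma hasnz_nseq0 n : hasnz (nseq n 0%N) = false.
Proof. by rewrite /hasnz has_nseq andbF. Qed.

Lemma sumn_hasnzN s : ~~ hasnz s -> sumn s = 0%N.
Proof. by move/hasnzN_nseq => ->; rewrite sumn_nseq. Qed.

Lemma nth_rcons0 (s : seq nat) i : nth 0%N (rcons s 0%N) i = nth 0%N s i.
Proof.
by rewrite nth_rcons; case: ltngtP => // H; rewrite nth_default //; lia.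
Qed.

Lemma hasnz_drop_rcons0 k g : hasnz (drop k (rcons g 0%N)) = hasnz (drop k g).
Proof.
by apply/hasnz_dropP/hasnz_dropP => -[j Hj Hnz]; exists j; rewrite // ?nth_rcons0 // -nth_rcons0.
Qed.

Definition swap_index (p j : nat) : nat :=
  if j == p then p.+1 else if j == p.+1 then p else j.

Lemma swap_indexK p : involutive (swap_index p).
Proof. by move=> j; rewrite /swap_index; do ! case: eqP => /=; lia. Qed.

Lemma nth_swapexp p g j : nth 0%N (swapexp p g) j = nth 0%N g (swap_index p j).
Proof.
rewrite /swapexp; case: (ltnP j (maxn (size g) p.+2)) => H.
  by rewrite (nth_map 0%N) ?size_iota // nth_iota.
rewrite !nth_default ?size_map ?size_iota // /swap_index.
by do ! case: eqP; lia.
Qed.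

Lemma hasnz_drop_swapexp p k g : ((p.+1 < k) || (k <= p))%N ->
  hasnz (drop k (swapexp p g)) = hasnz (drop k g).
Proof.
have swap_ge j : ((p.+1 < k) || (k <= p))%N -> (k <= j)%N -> (k <= swap_index p j)%N.
  by rewrite /swap_index => /orP[] ? ?; do ! case: eqP; lia.
move=> Hpk; apply/hasnz_dropP/hasnz_dropP => -[j Hj Hnz].
  by exists (swap_index p j); rewrite -?nth_swapexp ?swap_ge.
by exists (swap_index p j); rewrite ?nth_swapexp ?swap_indexK ?swap_ge.
Qed.

Lemma prod_nth_widen (R : nzSemiRingType) (F : nat -> R) (e : seq nat) N :
  F 0%N = 1 -> (size e <= N)%N ->
  \prod_(i < size e) F (nth 0%N e i) = \prod_(i < N) F (nth 0%N e i).
Proof.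
move=> F0 H; rewrite -(subnKC H) big_split_ord /= [X in _ = _ * X]big1 ?mulr1 //.
by move=> i _; rewrite nth_default ?F0 // leq_addr.
Qed.

Lemma lin0 : lin 0 = 1. Proof. by []. Qed.

Lemma phi0 : phi 0 = 1.
Proof. by rewrite /phi /psmul big_ord1 /psi big_ord1 /= mulr1 mul1r. Qed.

Lemma Pc_cons_x k x e g : Pc k (x :: e) g = phi x * Pc k e g.
Proof. by rewrite /Pc; case: ifP => _; rewrite ?mulr0 // /= big_ord_recl mulrA. Qed.

Lemma Pc_cons_a k x e g : Pc k.+1 e (x :: g) = lin x * Pc k e g.
Proof. by rewrite /Pc /=; case: ifP => _; rewrite ?mulr0 // big_ord_recl /=; ring. Qed.

Lemma Pc_nil_a k e : Pc k.+1 e [::] = Pc k e [::].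
Proof. by rewrite /Pc /=; congr (_ * _); rewrite !big1 // => i _; rewrite nth_nil. Qed.

Lemma Pc_factor k e g : Pc k e g = Pc 0 e [::] * Pc k [::] g.
Proof. by rewrite /Pc /= big_ord0 mulr1; case: ifP; rewrite ?mulr0 // big_ord0 mul1r. Qed.

Lemma Pc_tail k e g : hasnz (drop k g) -> Pc k e g = 0.
Proof. by rewrite /Pc /hasnz => ->. Qed.

Lemma Pc0_hasnzN e g : ~~ hasnz g -> Pc 0 e g = Pc 0 e [::].
Proof. by rewrite /Pc /hasnz drop0 /= => /negbTE ->; rewrite !big_ord0. Qed.

Lemma Pc_rcons0_x k e g : Pc k (rcons e 0%N) g = Pc k e g.
Proof.
rewrite /Pc size_rcons; case: ifP => _ //; congr (_ * _).
rewrite (@prod_nth_widen _ _ e _ phi0 (leqnSn _)).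
by apply: eq_bigr => i _; rewrite nth_rcons0.
Qed.

Lemma Pc_rcons0_a k e g : Pc k e (rcons g 0%N) = Pc k e g.
Proof.
rewrite /Pc; have := hasnz_drop_rcons0 k g; rewrite /hasnz => ->.
by case: ifP => _ //; congr (_ * _); apply: eq_bigr => i _; rewrite nth_rcons0.
Qed.

Lemma Pc_perm_x n (s : 'S_n) e g : (size e <= n)%N ->
  Pc 0 [seq nth 0%N e (s i) | i <- enum 'I_n] g = Pc 0 e g.
Proof.
move=> He; rewrite /Pc; case: ifP => _ //; congr (_ * _).
rewrite size_map size_enum_ord (@prod_nth_widen _ _ e n phi0 He).
rewrite [RHS](reindex_inj (@perm_inj _ s)); apply: eq_bigr => i _.
by rewrite (nth_map i) ?size_enum_ord // nth_ord_enum.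
Qed.

Lemma Pc_swapexp p k e g : ((p.+1 < k) || (k <= p))%N ->
  Pc k e (swapexp p g) = Pc k e g.
Proof.
move=> Hpk; rewrite /Pc; have := hasnz_drop_swapexp g Hpk; rewrite /hasnz => ->.
case: ifP => _ //; congr (_ * _).
case/orP: Hpk => Hpk; last first.
  apply: eq_bigr => i _; rewrite nth_swapexp /swap_index.
  by do 2 (case: eqP; first by have := ltn_ord i; lia).
have Hp : (p < k)%N by lia.
pose a := Ordinal Hp; pose b := Ordinal Hpk.
rewrite (reindex_inj (@perm_inj _ (tperm a b))); apply: eq_bigr => i _.
suff -> : nat_of_ord (tperm a b i) = swap_index p i by rewrite nth_swapexp swap_indexK.
rewrite /swap_index; case: tpermP => [->|->|/eqP Hia /eqP Hib] /=; rewrite ?eqxx //.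
  by case: eqP => //; lia.
rewrite ifN_eq; last by apply: contra Hia => /eqP Hi; apply/eqP/val_inj.
by rewrite ifN_eq //; apply: contra Hib => /eqP Hi; apply/eqP/val_inj.
Qed.

Section Homogeneous.
Variable R : nzRingType.
Implicit Types P Q : {poly {poly R}}.

Definition homog (d : nat) P := forall a b, (P`_a)`_b != 0 -> (a + b)%N = d.

Lemma homog0 d : homog d 0.
Proof. by move=> a b; rewrite !coef0 eqxx. Qed.

Lemma homog1 : homog 0 1.
Proof.
move=> a b; rewrite coef1; case: a => [|a] /=; last by rewrite coef0 eqxx.
by rewrite coef1; case: b => [|b] //=; rewrite eqxx.
Qed.

Lemma homogW d d' P : d = d' -> homog d P -> homog d' P.
Proof. by move=> ->. Qed.

Lemma homogD d P Q : homog d P -> homog d Q -> homog d (P + Q).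
Proof.
move=> HP HQ a b; rewrite !coefD; case: (eqVneq ((P`_a)`_b) 0) => [->|/HP //].
by rewrite add0r => /HQ.
Qed.

Lemma homogN d P : homog d P -> homog d (- P).
Proof. by move=> HP a b; rewrite !coefN oppr_eq0 => /HP. Qed.

Lemma homog_sum d n (F : 'I_n -> {poly {poly R}}) :
  (forall i, homog d (F i)) -> homog d (\sum_(i < n) F i).
Proof. by move=> H; elim/big_ind: _ => //; [exact: homog0 | exact: homogD]. Qed.

Lemma homogM d1 d2 P Q : homog d1 P -> homog d2 Q -> homog (d1 + d2) (P * Q).
Proof.
move=> HP HQ a b Hnz; apply/eqP; apply: contraNT Hnz => Hne; apply/eqP.
rewrite coefM coef_sum big1 // => i _; rewrite coefM big1 // => l _.
case: (eqVneq ((P`_i)`_l) 0) => [->|/HP H1]; first by rewrite mul0r.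
case: (eqVneq ((Q`_(a - i))`_(b - l)) 0) => [->|/HQ H2]; first by rewrite mulr0.
by have := ltn_ord i; have := ltn_ord l; move: Hne => /eqP; lia.
Qed.

Lemma homog_prod n (w : 'I_n -> nat) (F : 'I_n -> {poly {poly R}}) :
  (forall i, homog (w i) (F i)) -> homog (\sum_(i < n) w i) (\prod_(i < n) F i).
Proof.
elim: n w F => [|n IH] w F H; first by rewrite !big_ord0; exact: homog1.
by rewrite big_ord_recr [X in homog _ X]big_ord_recr; apply: homogM => //; apply: IH.
Qed.

Lemma homogX d P n : homog d P -> homog (d * n) (P ^+ n).
Proof.
move=> H; elim: n => [|n IH]; first by rewrite muln0 expr0; exact: homog1.
by rewrite exprS mulnS; apply: homogM.
Qed.

End Homogeneous.

Lemma homog_bb : homog 1 bb.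
Proof.
move=> [|a] b; rewrite /bb /beta coefC /= ?coef0 ?eqxx //.
by rewrite coefX; case: b => [|[|b]].
Qed.

Lemma homog_uu : homog 1 uu.
Proof.
by move=> [|[|a]] b; rewrite /uu coefX /= ?coef0 ?eqxx // coef1; case: b.
Qed.

Lemma homog_cc : homog 1 cc.
Proof. exact: homogD homog_uu homog_bb. Qed.

Lemma homog_lin j : homog j (lin j).
Proof. by case: j => [|[|j]]; [exact: homog1 | exact: homog_cc | exact: homog0]. Qed.

Lemma homog_tbar j : homog j.-1 (tbarR bb j).
Proof.
case: j => [|j] /=; first exact: homog0.
apply/homogN/(homogW (mul1n j)).
exact/homogX/homogN/homog_bb.
Qed.

Lemma homog_psexp_tbar n j : homog (j - n) (psexp (tbarR bb) n j).
Proof.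
elim: n j => [|n IH] j.
  by rewrite /psexp /= /psone; case: j => [|j]; [exact: homog1 | exact: homog0].
rewrite /psexp /= /psmul; apply: homog_sum => i.
case: (nat_of_ord i) (ltn_ord i) => [|i'] Hi; first by rewrite mul0r; exact: homog0.
case: (leqP n (j - i'.+1)) => Hn.
  apply: (@homogW _ (i' + (j - i'.+1 - n))); first by lia.
  by apply: homogM; [exact: homog_tbar | exact: IH].
by rewrite -/(psexp (tbarR bb) n (j - i'.+1)) psexp_lt // mulr0; exact: homog0.
Qed.

Lemma homog_psi j : homog j (psi j).
Proof.
apply: homog_sum => n; apply: (@homogW _ (1 * n + (j - n))).
  by have := ltn_ord n; lia.
apply: homogM; last exact: homog_psexp_tbar.
exact/homogX/homogN/homog_cc.
Qed.

Lemma homog_phi j : homog j (phi j).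
Proof.
apply: homog_sum => i; apply: (@homogW _ (i + (j - i))).
  by have := ltn_ord i; lia.
by apply: homogM; [exact: homog_lin | exact: homog_psi].
Qed.

Lemma sum_nth_take k (s : seq nat) : (\sum_(i < k) nth 0%N s i)%N = sumn (take k s).
Proof.
elim: s k => [|x s IH] [|k] //; rewrite ?big_ord0 //.
  by rewrite big1 // => i _; rewrite nth_nil.
by rewrite big_ord_recl /= IH.
Qed.

Lemma homog_Pc k e g : homog (sumn e + sumn (take k g)) (Pc k e g).
Proof.
rewrite /Pc; case: ifP => _; first exact: homog0.
rewrite -{1}(take_size e) -!sum_nth_take.
by apply: homogM; apply: homog_prod => i; [exact: homog_phi | exact: homog_lin].
Qed.

Implicit Types (P Q : upoly) (L : upoly -> {poly rat}).

Definition qbeta_linear (L : upoly -> {poly rat}) :=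
  (forall P Q, L (P + Q) = L P + L Q) /\ (forall c P, L (c%:P * P) = c * L P).

Lemma qbeta_linear0 L : qbeta_linear L -> L 0 = 0.
Proof. by case=> _ LZ; rewrite -(mul0r 0) -polyC0 LZ mul0r. Qed.

Lemma qbeta_linear_sum L I (r : seq I) (F : I -> upoly) :
  qbeta_linear L -> L (\sum_(i <- r) F i) = \sum_(i <- r) L (F i).
Proof. by move=> HL; apply: big_morph; [exact: HL.1 | exact: qbeta_linear0]. Qed.

(* For [P = Pc k e g], [d] is the x,a-degree of the monomial, so [L P] lives in degree
   [m] of the grading with deg beta = -1. *)
Definition maps_homog_to_degree (L : upoly -> {poly rat}) (m : int) :=
  forall d P, homog d P -> forall i, (L P)`_i != 0 -> d%:Z - i%:Z = m.

Definition theta_coef (m : int) (P : upoly) : {poly rat} :=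
  \sum_(j < size P | m <= j%:Z) (- beta) ^+ absz (j%:Z - m) * P`_j.

Definition thetaS_coef (m : int) (P : upoly) : {poly rat} :=
  (2%:R : rat)^-1 *:
  \sum_(s < (absz ((size P)%:Z - m)).+1)
    ((- (2%:R : rat)^-1) ^+ s *: beta ^+ s) * theta_coef (m + s%:Z) P.

Lemma theta_coef_widen m P B : (size P <= B)%N ->
  theta_coef m P = \sum_(j < B | m <= j%:Z) (- beta) ^+ absz (j%:Z - m) * P`_j.
Proof.
move=> HB; rewrite /theta_coef big_mkcond [RHS]big_mkcond /=.
apply: (@sum_ord_widen0 _ (fun j : nat =>
  if m <= j%:Z then (- beta) ^+ absz (j%:Z - m) * P`_j else 0)) => //.
by move=> i /andP[Hi _]; rewrite nth_default // mulr0; case: ifP.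
Qed.

Lemma theta_coef_small m P : (size P)%:Z <= m -> theta_coef m P = 0.
Proof. by move=> H; rewrite /theta_coef big1 // => j Hj; have := ltn_ord j; lia. Qed.

Lemma thetaS_coef_widen m P N : (absz ((size P)%:Z - m) < N)%N ->
  thetaS_coef m P = (2%:R : rat)^-1 *:
  \sum_(s < N) ((- (2%:R : rat)^-1) ^+ s *: beta ^+ s) * theta_coef (m + s%:Z) P.
Proof.
move=> HN; rewrite /thetaS_coef; congr (_ *: _).
apply: (@sum_ord_widen0 _ (fun s : nat =>
  ((- (2%:R : rat)^-1) ^+ s *: beta ^+ s) * theta_coef (m + s%:Z) P)) => //.
by move=> i /andP[Hi _]; rewrite theta_coef_small ?mulr0 //; lia.
Qed.

Lemma theta_coef_linear m : qbeta_linear (theta_coef m).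
Proof.
split=> [P Q | c P].
  rewrite (@theta_coef_widen m (P + Q) (size P + size Q)); last first.
    by apply: leq_trans (size_polyD _ _) _; rewrite geq_max leq_addr leq_addl.
  rewrite (@theta_coef_widen m P (size P + size Q)) ?leq_addr //.
  rewrite (@theta_coef_widen m Q (size P + size Q)) ?leq_addl //.
  by rewrite -big_split; apply: eq_bigr => j _; rewrite coefD mulrDr.
rewrite (@theta_coef_widen m (c%:P * P) (size P)); last first.
  by apply: leq_trans (size_polyMleq _ _) _; have := size_polyC_leq1 c; lia.
by rewrite /theta_coef mulr_sumr; apply: eq_bigr => j _; rewrite coefCM mulrCA.
Qed.

Lemma thetaS_coef_linear m : qbeta_linear (thetaS_coef m).
Proof.
split=> [P Q | c P].
  set N := (absz ((size (P + Q)%R)%:Z - m) + absz ((size P)%:Z - m)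
            + absz ((size Q)%:Z - m)).+1.
  rewrite !(@thetaS_coef_widen _ _ N); try by rewrite /N; lia.
  rewrite -scalerDr -big_split; congr (_ *: _); apply: eq_bigr => s _.
  by rewrite (theta_coef_linear _).1 mulrDr.
set N := (absz ((size (c%:P * P)%R)%:Z - m) + absz ((size P)%:Z - m)).+1.
rewrite !(@thetaS_coef_widen _ _ N); try by rewrite /N; lia.
rewrite -scalerAr mulr_sumr; congr (_ *: _); apply: eq_bigr => s _.
by rewrite (theta_coef_linear _).2 mulrCA.
Qed.

Lemma theta_coefMXn m P t : theta_coef m (P * 'X^t) = theta_coef (m - t%:Z) P.
Proof.
rewrite (@theta_coef_widen m _ (t + size P)); last first.
  by apply: leq_trans (size_polyMleq _ _) _; rewrite size_polyXn; lia.
rewrite big_mkcond big_split_ord /= big1 ?add0r; last first.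
  by move=> i _; rewrite coefMXn ltn_ord mulr0; case: ifP.
rewrite /theta_coef [RHS]big_mkcond /=; apply: eq_bigr => i _.
rewrite coefMXn ltnNge leq_addr /= addKn.
have -> : (m <= (t + i)%N%:Z) = (m - t%:Z <= i%:Z) by apply/idP/idP; lia.
by case: ifP => // _; congr (_ ^+ _ * _); lia.
Qed.

Lemma thetaS_coefMXn m P t : thetaS_coef m (P * 'X^t) = thetaS_coef (m - t%:Z) P.
Proof.
set N := (absz ((size (P * 'X^t)%R)%:Z - m) + absz (((size P)%:Z - (m - t%:Z))%R)).+1.
rewrite !(@thetaS_coef_widen _ _ N); try by rewrite /N; lia.
congr (_ *: _); apply: eq_bigr => s _; rewrite theta_coefMXn; congr (_ * theta_coef _ _).
ring.
Qed.

Lemma coef_negbeta_exp s (q : {poly rat}) i :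
  ((- beta) ^+ s * q)`_i = (-1) ^+ s * (if (i < s)%N then 0 else q`_(i - s)).
Proof.
rewrite [(- beta) ^+ s]exprNn -mulrA -(@signr_odd {poly rat} s) -(@signr_odd rat s) /beta.
by case: (odd s); rewrite ?expr1 ?expr0 ?mulN1r ?mul1r ?coefN coefXnM.
Qed.

Lemma theta_coef_degree m : maps_homog_to_degree (theta_coef m) m.
Proof.
move=> d P HP i Hnz; apply/eqP; apply: contraNT Hnz => Hne; apply/eqP.
rewrite /theta_coef coef_sum big1 // => j Hj; rewrite coef_negbeta_exp.
case: ifPn => Hi; first by rewrite mulr0.
case: (eqVneq ((P`_j)`_(i - absz (j%:Z - m))) 0) => [->|/HP]; first by rewrite mulr0.
by move: Hne Hi => /eqP; rewrite -leqNgt; lia.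
Qed.

Lemma thetaS_coef_degree m : maps_homog_to_degree (thetaS_coef m) m.
Proof.
move=> d P HP i Hnz; apply/eqP; apply: contraNT Hnz => Hne; apply/eqP.
rewrite /thetaS_coef coefZ coef_sum big1 ?mulr0 // => s _.
rewrite -scalerAl coefZ /beta coefXnM.
case: ifPn => Hi; first by rewrite mulr0.
have [->|/(theta_coef_degree HP)] := eqVneq ((theta_coef (m + s%:Z) P)`_(i - s)) 0.
  by rewrite mulr0.
by move: Hne Hi => /eqP; rewrite -leqNgt; lia.
Qed.

Lemma subexps_mem e x : x \in subexps e ->
  size x = size e /\ forall i, (nth 0%N x i <= nth 0%N e i)%N.
Proof.
elim: e x => [|n e IH] x; first by rewrite /= inE => /eqP ->.
case/allpairsP => -[i s] [Hi Hs ->]; have [Hsz Hn] := IH _ Hs.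
rewrite mem_iota /= in Hi; split; first by rewrite /= Hsz.
by case=> [|j] /=; [lia | exact: Hn].
Qed.

Lemma subexps_self e : e \in subexps e.
Proof.
elim: e => [|n e IH]; first by rewrite /= inE.
by apply/allpairsP; exists (n, e); rewrite mem_iota /=; split => //; lia.
Qed.

Lemma subexps_nseq0 e : nseq (size e) 0%N \in subexps e.
Proof.
elim: e => [|n e IH]; first by rewrite /= inE.
by apply/allpairsP; exists (0%N, nseq (size e) 0%N); rewrite mem_iota /=; split => //; lia.
Qed.

Lemma subexps_uniq e : uniq (subexps e).
Proof.
elim: e => [|n e IH] //; apply: allpairs_uniq => //; first exact: iota_uniq.
by move=> [i s] [i' s'] _ _ /= [-> ->].
Qed.

Lemma size_esub e e1 : size (esub e e1) = size e.
Proof. by rewrite /esub size_map size_iota. Qed.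

Lemma nth_esub e e1 i : nth 0%N (esub e e1) i = (nth 0%N e i - nth 0%N e1 i)%N.
Proof.
case: (ltnP i (size e)) => H; first by rewrite /esub (nth_map 0%N) ?size_iota // nth_iota.
by rewrite nth_default ?size_esub // (@nth_default _ _ e) // sub0n.
Qed.

Lemma esub_nseq0 g : esub g (nseq (size g) 0%N) = g.
Proof.
apply: (@eq_from_nth _ 0%N) => [|i Hi]; first by rewrite size_esub.
by rewrite nth_esub nth_nseq; case: ifP; rewrite subn0.
Qed.

Lemma esubii e : esub e e = nseq (size e) 0%N.
Proof.
apply: (@eq_from_nth _ 0%N) => [|i Hi]; first by rewrite size_esub size_nseq.
by rewrite nth_esub nth_nseq subnn; case: ifP.
Qed.

(* Only the split e1 = e, g1 = 0 survives: f needs a-exponents 0, h needs x-exponents 0. *)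
Lemma sermul_afree_xfree f h e g : afree f -> xfree h ->
  sermul f h e g = f e (nseq (size g) 0%N) * h (nseq (size e) 0%N) g.
Proof.
move=> Hf Hh; rewrite /sermul (bigD1_seq e) ?subexps_self ?subexps_uniq //=.
rewrite [X in _ + X]big1_seq ?addr0; last first.
  move=> e1 /andP[Hne Hin]; apply: big1_seq => g1 _; rewrite Hh ?mulr0 //.
  apply: contraNT Hne => Hz; apply/eqP; have [Hsz Hle] := subexps_mem Hin.
  apply: (@eq_from_nth _ 0%N) => // i _.
  by have := nth_hasnzN Hz i; rewrite nth_esub; have := Hle i; lia.
rewrite (bigD1_seq (nseq (size g) 0%N)) ?subexps_nseq0 ?subexps_uniq //=.
rewrite [X in _ + X]big1_seq ?addr0 ?esub_nseq0 ?esubii // => g1 /andP[Hne Hin].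
rewrite Hf ?mul0r //; apply: contraNT Hne => Hz; apply/eqP.
by have [Hsz _] := subexps_mem Hin; rewrite (hasnzN_nseq Hz) Hsz.
Qed.

Lemma size_lin x : (size (lin x) <= 2)%N.
Proof.
rewrite /lin; case: eqP => _; first by rewrite size_poly1.
by case: eqP => _; rewrite ?size_poly0 // /cc /uu size_XaddC.
Qed.

Lemma size_Pc_nil_x k g : (size (Pc k [::] g) <= k.+1)%N.
Proof.
rewrite /Pc; case: ifP => _; first by rewrite size_poly0.
rewrite big_ord0 mul1r; elim: k => [|k IH]; first by rewrite big_ord0 size_poly1.
rewrite big_ord_recr /=; apply: leq_trans (size_polyMleq _ _) _.
rewrite -subn1 leq_subLR; apply: leq_trans (leq_add IH (size_lin _)) _.
by rewrite addn2 add1n.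
Qed.

Lemma inRa_Pc_coef k t : inRa (fun e g => if hasnz e then 0 else (Pc k [::] g)`_t).
Proof.
split.
- by move=> e g; rewrite Pc_rcons0_a /hasnz has_rcons /= -/(hasnz e).
- exists [:: t%:Z] => e g i; rewrite inE /mdeg.
  case He: (hasnz e); first by rewrite coef0 eqxx.
  case Hd: (hasnz (drop k g)); first by rewrite Pc_tail // !coef0 eqxx.
  move=> /(@homog_Pc k [::] g) /=; rewrite (sumn_hasnzN (negbT He)).
  rewrite -{2}(cat_take_drop k g) sumn_cat (sumn_hasnzN (negbT Hd)).
  by move=> H; apply/eqP; lia.
- by move=> e g He; rewrite /hasnz He.
- by exists k => e g Hd; rewrite Pc_tail //; case: ifP; rewrite ?coef0.
Qed.

Lemma qbeta_linear_sum2 L n (P : nat -> nat -> upoly) (q : nat -> nat -> {poly rat}) :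
  qbeta_linear L ->
  \sum_(a < n) \sum_(b < n) L (P a b) * q a b =
  L (\sum_(a < n) \sum_(b < n) (q a b)%:P * P a b).
Proof.
move=> HL; rewrite qbeta_linear_sum //; apply: eq_bigr => a _.
by rewrite qbeta_linear_sum //; apply: eq_bigr => b _; rewrite HL.2 mulrC.
Qed.

Section CoefficientFunctional.
Variable L : int -> upoly -> {poly rat}.
Hypothesis L_linear : forall m, qbeta_linear (L m).
Hypothesis L_degree : forall m, maps_homog_to_degree (L m) m.
Hypothesis L_MXn : forall m P t, L m (P * 'X^t) = L (m - t%:Z) P.

Lemma subst_t_tbar_Pc m :
  subst_t_tbar (fun e g => L m (Pc 0 e g)) = subst_0_0 (fun e g => L m (Pc 0 e g)).
Proof.
apply: functional_extensionality => e; apply: functional_extensionality => g.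
rewrite /subst_t_tbar /subst_0_0; case: eqP => [e1_0|]; last by rewrite andbF.
rewrite andbT /=; set n := nth 0%N e 0; set r := drop 2 e.
rewrite (@qbeta_linear_sum2 (L m) n.+1 (fun a b => Pc 0 (a :: b :: r) g)
           (fun a b => psexp (tbarR beta) b (n - a))) //.
transitivity (L m ((\sum_(a < n.+1) \sum_(b < n.+1)
     phi a * phi b * psexp (tbarR bb) b (n - a)) * Pc 0 r g)).
  congr (L m); rewrite mulr_suml; apply: eq_bigr => a _; rewrite mulr_suml.
  by apply: eq_bigr => b _; rewrite -psexp_tbar_polyC !Pc_cons_x; ring.
rewrite sum_phi_phi_tbar !Pc_cons_x phi0 !mul1r; case: (n == 0%N); first by rewrite mul1r.
by rewrite mul0r qbeta_linear0.
Qed.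

Lemma inGGamma_Pc m : inGGamma (fun e g => L m (Pc 0 e g)).
Proof.
split.
- by move=> e g; rewrite Pc_rcons0_x Pc_rcons0_a.
- exists [:: m] => e g i Hnz; rewrite inE /mdeg; apply/eqP.
  case Hg: (hasnz g).
    by move: Hnz; rewrite Pc_tail ?drop0 // qbeta_linear0 // coef0 eqxx.
  rewrite (sumn_hasnzN (negbT Hg)) addn0.
  by have := L_degree (@homog_Pc 0 e g) Hnz; rewrite take0 /= addn0.
- by move=> e g Hg; rewrite Pc_tail ?drop0 // qbeta_linear0.
- by move=> n s e g He; rewrite Pc_perm_x.
- exact: subst_t_tbar_Pc.
Qed.

Lemma L_Pc_decomp k m e g :
  L m (Pc k e g) = \sum_(t < k.+1) (Pc k [::] g)`_t * L (m - t%:Z) (Pc 0 e [::]).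
Proof.
rewrite Pc_factor; have {1}-> : Pc k [::] g = \sum_(t < k.+1) (Pc k [::] g)`_t *: 'X^t.
  rewrite -(poly_def k.+1 (fun t => (Pc k [::] g)`_t)); apply/polyP => i.
  rewrite coef_poly; case: ltnP => // Hi; rewrite nth_default //.
  exact: leq_trans (size_Pc_nil_x k g) Hi.
rewrite mulr_sumr qbeta_linear_sum //.
by apply: eq_bigr => t _; rewrite -scalerAr -mul_polyC (L_linear m).2 L_MXn.
Qed.

Lemma inGGammaRa_Pc k m : inGGammaRa (fun e g => L m (Pc k e g)).
Proof.
exists k.+1, (fun t : 'I_k.+1 => fun e g => L (m - t%:Z) (Pc 0 e g)),
  (fun t : 'I_k.+1 => fun e g => if hasnz e then 0 else (Pc k [::] g)`_t).
split=> [t | e g]; first by split; [exact: inGGamma_Pc | exact: inRa_Pc_coef].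
rewrite L_Pc_decomp; apply: eq_bigr => t _.
have [_ _ Gafree _ _] := inGGamma_Pc (m - t%:Z).
have [_ _ Rxfree _] := inRa_Pc_coef k t.
by rewrite sermul_afree_xfree // hasnz_nseq0 Pc0_hasnzN ?hasnz_nseq0 // mulrC.
Qed.

Lemma sa_Pc_invariant k m i : (i < k)%N \/ (k < i)%N ->
  sa i (fun e g => L m (Pc k e g)) = fun e g => L m (Pc k e g).
Proof.
move=> Hik; apply: functional_extensionality => e; apply: functional_extensionality => g.
rewrite /sa; case: i Hik => [|i] Hik /=; last first.
  by rewrite /sia /= Pc_swapexp //; apply/orP; case: Hik => ?; [left | right]; lia.
case: k Hik => [|k] Hik; first by case: Hik.
rewrite /s0a; set g0 := head 0%N g.
rewrite (@qbeta_linear_sum2 (L m) g0.+1 (fun a b => Pc k.+1 (a :: e) (b :: behead g))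
           (fun a b => psexp (tbarR beta) b (g0 - a))) //.
transitivity (L m ((\sum_(a < g0.+1) \sum_(b < g0.+1)
   phi a * lin b * psexp (tbarR bb) b (g0 - a)) * Pc k e (behead g))).
  congr (L m); rewrite mulr_suml; apply: eq_bigr => a _; rewrite mulr_suml.
  by apply: eq_bigr => b _; rewrite -psexp_tbar_polyC Pc_cons_x Pc_cons_a; ring.
rewrite sum_phi_lin_tbar {}/g0; case: g => [|x g] /=; last by rewrite Pc_cons_a.
by rewrite lin0 mul1r Pc_nil_a.
Qed.

End CoefficientFunctional.

Theorem lemma9p1 (k : nat) (m : int) :
  [/\ inGGammaRa (GTheta k m), inGGammaRa (GThetaS k m),
      (forall i : nat, (i < k)%N \/ (k < i)%N -> sa i (GTheta k m) = GTheta k m) &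
      (forall i : nat, (i < k)%N \/ (k < i)%N -> sa i (GThetaS k m) = GThetaS k m)].
Proof.
split=> [||i|i].
- exact: inGGammaRa_Pc theta_coef_linear theta_coef_degree theta_coefMXn k m.
- exact: inGGammaRa_Pc thetaS_coef_linear thetaS_coef_degree thetaS_coefMXn k m.
- exact: sa_Pc_invariant theta_coef_linear k m i.
- exact: sa_Pc_invariant thetaS_coef_linear k m i.
Qed.
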